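(* For $n\ge2$ and all $P,Q\in\Gamma_n$, $\frac18 J(P\|Q)\le T(P\|Q)$.
   Context: $\Gamma_n=\{P=(p_1,\dots,p_n): p_i>0,\ \sum p_i=1\}$. $J(P\|Q)=\sum_{i=1}^n(p_i-q_i)\ln\frac{p_i}{q_i}$; $T(P\|Q)=\sum_{i=1}^n\frac{p_i+q_i}{2}\ln\frac{p_i+q_i}{2\sqrt{p_iq_i}}$ (natural logarithm). *)

From mathcomp Require Import all_boot all_order all_algebra.
From mathcomp Require Import all_classical all_reals.
From mathcomp Require Import exp.
Import Order.TTheory GRing.Theory Num.Theory.
Local Open Scope ring_scope.

Definition in_Gamma {R : realType} (n : nat) (P : 'I_n -> R) : Prop :=
  (forall i, 0 < P i) /\ \sum_(i < n) P i = 1.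

Definition Jdiv {R : realType} (n : nat) (P Q : 'I_n -> R) : R :=
  \sum_(i < n) (P i - Q i) * ln (P i / Q i).

Definition Tdiv {R : realType} (n : nat) (P Q : 'I_n -> R) : R :=
  \sum_(i < n) (P i + Q i) / 2 * ln ((P i + Q i) / (2 * Num.sqrt (P i * Q i))).

From mathcomp Require Import all_boot all_order all_algebra.
From mathcomp Require Import all_classical all_reals.
From mathcomp Require Import exp realfun derive normedtype.
From mathcomp Require Import ring lra.
Import Order.TTheory GRing.Theory Num.Theory.
Import numFieldNormedType.Exports.
Local Open Scope ring_scope.

(* Both divergences are sums of homogeneous summands, so it suffices to compare
   the summands for a single pair a, b > 0.  By symmetry b <= a, and with
   y := a / b >= 1 the comparison becomes
     (y - 1) / (4 (y + 1)) ln y <= ln ((y + 1) / (2 sqrt y)).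
   The difference of the two sides vanishes at y = 1 and has derivative
   ((y - 1/y)/2 - ln y) / (2 (y + 1)^2), which is nonnegative because
   ln y <= (y - 1/y)/2 for y >= 1; the latter holds in turn because its own
   difference vanishes at 1 and has derivative (1 - 1/y)^2 / 2. *)

Section PointwiseInequality.
Variable R : realType.

Lemma ger0_is_derive_ler (f df : R -> R) (a x : R) :
  (forall y, a <= y -> is_derive y 1 f (df y)) ->
  (forall y, a < y -> 0 <= df y) -> a <= x -> f a <= f x.
Proof.
move=> fdf df_ge0 ax; apply: (@ger0_derive1_ndecry R f a) => //.
- by move=> y; rewrite in_itv /= andbT => /ltW /fdf [].
- move=> y; rewrite in_itv /= andbT => ay.
  by rewrite derive1E (@derive_val _ _ _ _ _ _ _ (fdf _ (ltW ay))) df_ge0.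
- apply: derivable_within_continuous => y; rewrite in_itv /= andbT.
  by move=> /fdf [].
Qed.

Lemma ln_le_half_sub_inv (y : R) : 1 <= y -> ln y <= (y - y^-1) / 2.
Proof.
move=> y1; pose K (z : R) := (z - z^-1) / 2 - ln z.
suff : K 1 <= K y by rewrite /K invr1 subrr mul0r ln1 subr0 subr_ge0.
apply: (ger0_is_derive_ler _ (fun z => (1 - z^-1) ^+ 2 / 2)) => // z z1.
  have z0 : 0 < z by lra.
  (* [dln] and [dinv] are used by instance resolution in [is_derive_eq]. *)
  have dln := is_derive1_ln z0.
  have dinv : is_derive z 1 (fun y : R => y^-1) (- z ^- 2).
    apply: is_derive_eq; first by apply: is_deriveV; rewrite gt_eqF.
    by rewrite /GRing.scale /= mulr1.
  apply: is_derive_eq.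
  by rewrite /GRing.scale /=; field; rewrite gt_eqF.
by rewrite divr_ge0 // sqr_ge0.
Qed.

Lemma ln_AMGM_ratio_ge (y : R) : 1 <= y ->
  (y - 1) / (4 * (y + 1)) * ln y <= ln ((y + 1) / (2 * Num.sqrt y)).
Proof.
move=> y1; have y0 : 0 < y by lra.
(* The difference of the two sides, expanded into terms that are easy to
   differentiate, using (y - 1) / (4 (y + 1)) = 1/4 - 1 / (2 (y + 1)). *)
pose G (z : R) := ln (z + 1) - ln 2 - 3 / 4 * ln z + ln z / (2 * (z + 1)).
have ln_sqrt : ln (Num.sqrt y) = ln y / 2.
  by rewrite -{2}(sqr_sqrtr (ltW y0)) lnXn ?sqrtr_gt0 // mulr2n; field.
have -> : ln ((y + 1) / (2 * Num.sqrt y)) = ln (y + 1) - ln 2 - ln y / 2.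
  rewrite ln_div ?lnM ?posrE ?mulr_gt0 ?sqrtr_gt0 //; last lra.
  by rewrite ln_sqrt opprD addrA.
suff : G 1 <= G y.
  have -> : (y - 1) / (4 * (y + 1)) = 1 / 4 - (2 * (y + 1))^-1 by field; lra.
  rewrite /G ln1 (_ : 1 + 1 = 2 :> R) // !(mul0r, mulr0, addr0, subr0) subrr.
  lra.
apply: (ger0_is_derive_ler _ (fun z => ((z - z^-1) / 2 - ln z) / (2 * (z + 1) ^+ 2))) => // z z1.
  have z0 : 0 < z by lra.
  have dln := is_derive1_ln z0.
  have dln1 : is_derive (z + 1) 1 (@ln R) (z + 1)^-1 by apply: is_derive1_ln; lra.
  have dinv : is_derive z 1 (fun y : R => (2 * (y + 1))^-1) (- (2 * (z + 1)) ^- 2 * 2).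
    apply: is_derive_eq; first by apply: is_deriveV; rewrite gt_eqF //; lra.
    by rewrite /GRing.scale /= addr0 mulr1.
  apply: is_derive_eq.
  by rewrite /GRing.scale /=; field; rewrite !gt_eqF //; lra.
rewrite divr_ge0 ?subr_ge0 ?ln_le_half_sub_inv ?ltW //.
by rewrite mulr_gt0 ?exprn_gt0 //; lra.
Qed.

Lemma J_summand_div8_le_T_summand (a b : R) : 0 < a -> 0 < b ->
  (a - b) * ln (a / b) / 8 <= (a + b) / 2 * ln ((a + b) / (2 * Num.sqrt (a * b))).
Proof.
wlog ba : a b / b <= a.
  move=> ordered a0 b0; have [/ordered|ab] := leP b a; first exact.
  have := ordered b a (ltW ab) b0 a0.
  by rewrite (addrC b a) (mulrC b a) -[b / a]invf_div lnV ?posrE ?divr_gt0 // mulrN -mulNr opprB.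
move=> _ b0; set y := a / b.
have ea : a = y * b by rewrite divfK // gt_eqF.
have y1 : 1 <= y by rewrite ler_pdivlMr // mul1r.
clearbody y; subst a.
have sqrt_yb : Num.sqrt (y * b * b) = Num.sqrt y * b.
  by rewrite -mulrA sqrtrM -?expr2 ?sqrtr_sqr ?gtr0_norm //; lra.
rewrite sqrt_yb (_ : (y * b + b) / (2 * (Num.sqrt y * b)) = (y + 1) / (2 * Num.sqrt y)); last first.
  by field; rewrite !gt_eqF ?sqrtr_gt0 //; lra.
rewrite (_ : (y * b - b) * ln y / 8 = (y * b + b) / 2 * ((y - 1) / (4 * (y + 1)) * ln y)).
  by rewrite ler_wpM2l ?ln_AMGM_ratio_ge // divr_ge0 //; lra.
by field; lra.
Qed.

End PointwiseInequality.

Theorem proposition3p4 (R : realType) (n : nat) (hn : (2 <= n)%N)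
  (P Q : 'I_n -> R) (hP : in_Gamma n P) (hQ : in_Gamma n Q) :
  Jdiv n P Q / 8 <= Tdiv n P Q.
Proof.
rewrite /Jdiv /Tdiv mulr_suml; apply: ler_sum => i _.
exact: J_summand_div8_le_T_summand (hP.1 i) (hQ.1 i).
Qed.
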